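(* For every dimension $d\ge 1$, $\theta^{\rm D}(1,d)=0$.
   Context: Fix integers $d\ge1$ and $1\le k\le 2d$. The directed $k$-neighbor graph ($k$-DnG) on $\mathbb{Z}^d$ is the random directed graph obtained by letting each vertex $x\in\mathbb{Z}^d$, independently of all other vertices, choose a uniformly random subset of exactly $k$ of its $2d$ nearest neighbors (in $\ell_1$-distance), and placing a directed edge from $x$ to each chosen neighbor. We write $\theta^{\rm D}(k,d)=\mathbb{P}(o\rightsquigarrow\infty \text{ in the $k$-DnG on }\mathbb{Z}^d)$, where $o$ is the origin and $o\rightsquigarrow\infty$ is the event that there is an infinite self-avoiding directed path along edges of the $k$-DnG starting at $o$ (equivalently, $o$ is connected by directed paths to vertices arbitrarily far away). *)

From HB Require Import structures.
From mathcomp Require Import all_boot all_order all_algebra.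
From mathcomp Require Import all_classical all_reals all_analysis.
Set Implicit Arguments. Unset Strict Implicit. Unset Printing Implicit Defensive.
Import Order.TTheory GRing.Theory Num.Theory.
Local Open Scope classical_set_scope.
Local Open Scope ring_scope.

Definition vertex (d : nat) := {ffun 'I_d -> int}.

Definition origin (d : nat) : vertex d := [ffun => 0%R].

(* The 2d nearest neighbours (in l1 distance) of x are x +/- e_i; they are
   indexed by directions (i, b) : 'I_d * bool, b = true meaning +e_i. *)
Definition dir (d : nat) := ('I_d * bool)%type.

Definition step (d : nat) (x : vertex d) (e : dir d) : vertex d :=
  [ffun j => if j == e.1 then x j + (if e.2 then 1 else -1) else x j].

(* A realisation of the choices: ch x is the set of directions chosen by x.
   There is a directed edge x -> y iff y = step x e for some e \in ch x. *)
Definition dedge (d : nat) (ch : vertex d -> {set dir d}) (x y : vertex d) : Prop :=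
  exists2 e, e \in ch x & y = step x e.

Definition reaches_infinity (d : nat) (ch : vertex d -> {set dir d}) : Prop :=
  exists p : nat -> vertex d,
    [/\ p 0%N = origin d, injective p & forall n, dedge ch (p n) (p n.+1)].

Definition is_kDnG (k d : nat) (dsp : measure_display) (T : measurableType dsp)
    (R : realType) (P : probability T R) (C : vertex d -> T -> {set dir d}) : Prop :=
  [/\ (forall x S, measurable [set w | C x w = S]),
      (forall x (S : {set dir d}), #|S| = k ->
         P [set w | C x w = S] = ((('C(2 * d, k))%:R)^-1)%:E) &
      (forall (xs : seq (vertex d)) (Ss : vertex d -> {set dir d}), uniq xs ->
         P [set w | forall x, x \in xs -> C x w = Ss x]
         = (\prod_(x <- xs) P [set w | C x w = Ss x])%E)].

From HB Require Import structures.
From mathcomp Require Import all_boot all_order all_algebra.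
From mathcomp Require Import all_classical all_reals all_analysis.
Set Implicit Arguments. Unset Strict Implicit. Unset Printing Implicit Defensive.
Import Order.TTheory GRing.Theory Num.Theory.
Local Open Scope classical_set_scope.

(* König's lemma identifies the event [o ~> oo] with the intersection over n of the events
   "some self-avoiding walk of length n from o uses only chosen edges", which makes it
   measurable.  A fixed self-avoiding walk of length n leaves n distinct vertices, so by
   independence all its steps are chosen with probability (2d)^-n; vertices with a number
   of choices other than one form a null set.  Since there are at most 2d (2d-1)^(n-1)
   such walks, the union bound gives P(o ~> oo) <= ((2d-1)/(2d))^(n-1) for every n. *)

Section Konig.
Variables (D : finType) (Q : pred (seq D)).
Hypothesis Q_prefix : forall s t, Q (s ++ t) -> Q s.

Definition extendable (s : seq D) := forall m, exists t, size t = m /\ Q (s ++ t).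

Lemma extendable_rcons s : extendable s -> exists e, extendable (rcons s e).
Proof.
move=> ext_s; apply: contrapT => /forallNP no_ext.
have /choice [M hM] e : exists m, forall t, size t = m -> ~ Q (rcons s e ++ t).
  have /existsNP [m hm] := no_ext e.
  by exists m => t ht Qt; apply: hm; exists t.
have [[|e t] [//= [ht] Qst]] := ext_s (\max_e M e).+1.
apply: (hM e (take (M e) t)).
  by rewrite size_take_min ht; apply/minn_idPl/leq_bigmax.
by apply: (@Q_prefix _ (drop (M e) t)); rewrite -catA cat_take_drop cat_rcons.
Qed.

Lemma konig : (forall n, exists s, size s = n /\ Q s) ->
  exists u : nat -> D, forall n, Q (mkseq u n).
Proof.
move=> long_Q.
have ext0 : extendable [::] by move=> m; have [t [ht Qt]] := long_Q m; exists t.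
(* a letter, to make the choice function [f] below total *)
have [[|e0 ?] [//= _ _]] := ext0 1%N.
have /choice [f hf] s : exists e, extendable s -> extendable (rcons s e).
  have [/extendable_rcons [e he]|] := pselect (extendable s); last by exists e0.
  by exists e.
pose g n := iter n (fun s => rcons s (f s)) [::].
have ext_g n : extendable (g n) by elim: n => //= n /hf.
have g_mkseq n : g n = mkseq (f \o g) n by elim: n => // n IH; rewrite mkseqS /= -IH.
exists (f \o g) => n; rewrite -g_mkseq.
by have [t [/size0nil -> Qt]] := ext_g n 0%N; rewrite -(cats0 (g n)).
Qed.

End Konig.

Fixpoint all_seqs (T : finType) (n : nat) : seq (seq T) :=
  if n is n'.+1 then [seq e :: s | e <- enum T, s <- all_seqs T n'] else [:: [::]].

Lemma mem_all_seqs (T : finType) n (s : seq T) : (s \in all_seqs T n) = (size s == n).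
Proof.
elim: n s => [|n IH] [|e s] //=; first by apply/allpairsPdep => -[? [? [_ _]]].
rewrite eqSS -IH; apply/allpairsPdep/idP => [[? [? [_ ? [_ ->]]]] // | s_n].
by exists e, s; rewrite mem_enum.
Qed.

Lemma count_all_seqs_cons (T : finType) n (a : pred (seq T)) :
  count a (all_seqs T n.+1) = \sum_(e : T) count (fun s => a (e :: s)) (all_seqs T n).
Proof. by rewrite count_flatten sumnE !big_map; apply: eq_bigr => e _; apply: count_map. Qed.

Section Walks.
Variables (V : eqType) (D : finType) (next : V -> D -> V).
Implicit Types (ch : V -> {set D}) (x : V) (s t : seq D).

Fixpoint steps x s : seq (V * D) :=
  if s is e :: s' then (x, e) :: steps (next x e) s' else [::].

Definition along ch x s := all (fun q => q.2 \in ch q.1) (steps x s).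

Definition self_avoiding x s := uniq (x :: scanl next x s).

Definition dpath ch x s := along ch x s && self_avoiding x s.

Definition ray ch x := exists p : nat -> V,
  [/\ p 0%N = x, injective p & forall n, exists2 e, e \in ch (p n) & p n.+1 = next (p n) e].

Lemma steps_cat x s t : steps x (s ++ t) = steps x s ++ steps (foldl next x s) t.
Proof. by elim: s x => //= e s IH x; rewrite IH. Qed.

Lemma size_steps x s : size (steps x s) = size s.
Proof. by elim: s x => //= e s IH x; rewrite IH. Qed.

Lemma map_fst_steps x s : map fst (steps x s) = belast x (scanl next x s).
Proof. by elim: s x => //= e s IH x; rewrite IH. Qed.

Lemma self_avoiding_uniq_fst x s : self_avoiding x s -> uniq (map fst (steps x s)).
Proof. by rewrite map_fst_steps /self_avoiding lastI rcons_uniq => /andP[]. Qed.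

Lemma dpath_prefix ch x s t : dpath ch x (s ++ t) -> dpath ch x s.
Proof.
rewrite /dpath /along /self_avoiding steps_cat all_cat scanl_cat -cat_cons cat_uniq.
by case/andP=> /andP[-> _] /andP[-> _].
Qed.

Section IndexedWalk.
Variables (u : nat -> D) (p : nat -> V).
Hypothesis p_next : forall i, p i.+1 = next (p i) (u i).

Lemma steps_scanl_iota k n :
  steps (p k) (map u (iota k n)) = [seq (p i, u i) | i <- iota k n] /\
  scanl next (p k) (map u (iota k n)) = map p (iota k.+1 n).
Proof. by elim: n k => //= n IH k; rewrite -p_next; have [-> ->] := IH k.+1. Qed.

Lemma dpath_mkseq ch n :
  dpath ch (p 0%N) (mkseq u n) =
  all (fun i => u i \in ch (p i)) (iota 0 n) && uniq (mkseq p n.+1).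
Proof.
have [st sc] := steps_scanl_iota 0 n.
by rewrite /dpath /along /self_avoiding /mkseq st sc all_map.
Qed.

End IndexedWalk.

Lemma rayP ch x : ray ch x <-> forall n, exists s, size s = n /\ dpath ch x s.
Proof.
split=> [[p [<- p_inj p_edge]] n | long].
  have /choice [u hu] i : exists e, e \in ch (p i) /\ p i.+1 = next (p i) e.
    by have [e ? ?] := p_edge i; exists e.
  exists (mkseq u n); rewrite size_mkseq (dpath_mkseq (fun i => (hu i).2)).
  rewrite mkseq_uniq // andbT; split=> //.
  by apply/allPn => -[i _ /negP]; apply; exact: (hu i).1.
have [u path_u] := konig (@dpath_prefix ch x) long.
pose p n := foldl next x (mkseq u n).
have p_next i : p i.+1 = next (p i) (u i) by rewrite /p mkseqS foldl_rcons.
have path_p n : all (fun i => u i \in ch (p i)) (iota 0 n) && uniq (mkseq p n.+1).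
  by rewrite -(dpath_mkseq p_next); apply: path_u.
exists p; split=> // [i j | n].
  have /andP[_ /mkseq_uniqP p_inj] := path_p (maxn i j).
  by apply: p_inj; rewrite inE ltnS ?leq_maxl ?leq_maxr.
exists (u n); last exact: p_next.
have /andP[/allP hu _] := path_p n.+1.
by apply: (hu n); rewrite mem_iota add0n ltnS leqnn.
Qed.

Hypothesis next_reversible : forall x e, exists e', next (next x e) e' = x.

Lemma count_self_avoiding_cons x e n :
  count (fun s => self_avoiding x (e :: s)) (all_seqs D n) <= #|D|.-1 ^ n.
Proof.
elim: n x e => [|n IH] x e; first by rewrite /= addn0 leq_b1.
(* of the continuations after [e], those stepping straight back to [x] contribute nothing *)
have [b yb] := next_reversible x e; set y := next x e in yb *.
rewrite count_all_seqs_cons.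
apply: (@leq_trans (\sum_(e' | next y e' != x) #|D|.-1 ^ n)).
  rewrite [leqRHS]big_mkcond; apply: leq_sum => e' _; case: ifP => [_ | /negbFE/eqP y_back].
    by apply: leq_trans (IH y e'); apply: sub_count => s /andP[].
  rewrite leqn0 -(count_pred0 (all_seqs D n)); apply/eqP/eq_count => s.
  by rewrite /self_avoiding /= -/y y_back !inE eqxx !orbT.
rewrite sum_nat_const expnS leq_mul2r -(cardC1 b); apply/orP; right.
have avoid_b : [pred e' | next y e' != x] \subset predC1 b.
  by apply/fintype.subsetP => e'; rewrite !inE; apply: contraNneq => ->; rewrite yb.
exact: subset_leq_card avoid_b.
Qed.

Lemma count_self_avoiding x n :
  count (self_avoiding x) (all_seqs D n.+1) <= #|D| * #|D|.-1 ^ n.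
Proof.
rewrite count_all_seqs_cons.
apply: (@leq_trans (\sum_(e : D) #|D|.-1 ^ n)).
  by apply: leq_sum => e _; apply: count_self_avoiding_cons.
by rewrite sum_nat_const.
Qed.

End Walks.

Local Open Scope ring_scope.

Lemma uniq_map_inj_in (A B : eqType) (f : A -> B) (s : seq A) :
  uniq (map f s) -> {in s &, injective f}.
Proof.
elim: s => //= a s IH /andP[fa /IH inj_s] x y.
rewrite !inE => /predU1P[-> | xs] /predU1P[-> | ys] fxy //.
- by rewrite fxy map_f in fa.
- by rewrite -fxy map_f in fa.
- exact: inj_s.
Qed.

Section FiniteFamiliesOfEvents.
Local Open Scope ereal_scope.
Variables (dsp : measure_display) (T : measurableType dsp) (R : realType).
Variable mu : {measure set T -> \bar R}.

Lemma measure_bigsetU_seq_le (I : Type) (s : seq I) (Q : pred I) (F : I -> set T) :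
  (forall i, measurable (F i)) ->
  mu (\big[setU/set0]_(i <- s | Q i) F i) <= \sum_(i <- s | Q i) mu (F i).
Proof.
move=> mF; elim: s => [|i s IH]; first by rewrite !big_nil measure0.
rewrite !big_cons; case: (Q i) => //.
apply: le_trans (measureU2 _ (mF i) (bigsetU_measurable _ _)) _ => //.
by rewrite leeD2l.
Qed.

Lemma measure_bigsetU_seq (I : eqType) (s : seq I) (F : I -> set T) :
  uniq s -> (forall i, measurable (F i)) ->
  (forall i j, i != j -> F i `&` F j = set0) ->
  mu (\big[setU/set0]_(i <- s) F i) = \sum_(i <- s) mu (F i).
Proof.
move=> + mF dF; elim: s => [|i s IH]; first by rewrite !big_nil measure0.
move=> /= /andP[i_s /IH {}IH]; rewrite !big_cons measureU //.
- by congr (_ + _); exact: IH.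
- exact: bigsetU_measurable.
rewrite big_distrr /= big1_seq // => j /andP[_ j_s]; apply: dF.
by apply: contraNneq i_s => ->.
Qed.

Lemma measurable_all_seq (I : Type) (a : T -> pred I) (s : seq I) :
  (forall i, measurable [set w | a w i]) -> measurable [set w | all (a w) s].
Proof.
move=> mA; elim: s => [|i s IH] /=.
  by rewrite (_ : [set _ | true] = setT) //; apply/seteqP.
rewrite (_ : [set w | _ && _] = [set w | a w i] `&` [set w | all (a w) s]).
  exact: measurableI.
by apply/seteqP; split=> w /andP.
Qed.

End FiniteFamiliesOfEvents.

Lemma ge0_le_expr_eq0 (R : realType) (x : \bar R) (q : R) :
  (0 <= x)%E -> `|q| < 1 -> (forall n, x <= (q ^+ n)%:E)%E -> x = 0%E.
Proof.
move=> x_ge0 q_lt1; case: x x_ge0 => [r | | ] // r_ge0 r_le; last by have := r_le 0%N.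
congr (_%:E); apply/eqP; rewrite eq_le -[0 <= r]lee_fin r_ge0 andbT.
apply: (cvgr_to_ge (cvg_expr q_lt1)); apply: nearW => n; rewrite -lee_fin; exact: r_le.
Qed.

Lemma card_dir d : #|{: dir d}| = (2 * d)%N.
Proof. by rewrite card_prod card_ord card_bool mulnC. Qed.

Lemma step_reversible d (x : vertex d) (e : dir d) : exists e', step (step x e) e' = x.
Proof.
exists (e.1, ~~ e.2); apply/ffunP => j; rewrite !ffunE /=; case: eqP => // ->.
by case: e.2; [rewrite addrK | rewrite addrNK].
Qed.

Section OneNeighbourGraph.
Local Open Scope ereal_scope.
Variables (d : nat) (R : realType) (dsp : measure_display) (T : measurableType dsp).
Variables (P : probability T R) (C : vertex d -> T -> {set dir d}).
Hypothesis C_1DnG : is_kDnG 1 P C.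
Hypothesis d_gt0 : (0 < d)%N.

Let inv2d : R := ((2 * d)%:R)^-1.

Lemma measurable_choice x (f : pred {set dir d}) : measurable [set w | f (C x w)].
Proof.
rewrite (_ : [set w | _] = \bigcup_(S in [set S | f S]) [set w | C x w = S]).
  by apply: fin_bigcup_measurable finite_finset _ => S _; case: C_1DnG.
by apply/seteqP; split=> [w fCw | w [S fS /= ->]] //; exists (C x w).
Qed.

Lemma prob_choice_set1 x e : P [set w | C x w = [set e]%SET] = inv2d%:E.
Proof. by case: C_1DnG => _ P_choice _; rewrite P_choice ?cards1 // bin1. Qed.

Lemma prob_card_choice_neq1 x : P [set w | #|C x w| != 1%N] = 0.
Proof.
pose F e := [set w | C x w = [set e]%SET].
rewrite (_ : [set w | _] = ~` \big[setU/set0]_(e : dir d) F e); last first.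
  apply/seteqP; split=> w /=.
    by move=> Cw_neq1; rewrite -bigcup_seq => -[e _ /= Cw]; rewrite Cw cards1 in Cw_neq1.
  move=> notF; apply/negP => /cards1P [e Cw]; apply: notF.
  by rewrite -bigcup_seq; exists e => //=; rewrite mem_index_enum.
have mF e : measurable (F e) by case: C_1DnG => mC _ _; apply: mC.
rewrite probability_setC; last by apply: bigsetU_measurable.
rewrite measure_bigsetU_seq ?index_enum_uniq //; last first.
  move=> e e' ne; apply/seteqP; split=> // w [Ce Ce'].
  by rewrite (set1_inj (etrans (esym Ce) Ce')) eqxx in ne.
rewrite (eq_bigr _ (fun e _ => prob_choice_set1 x e)) sumEFin sumr_const card_dir.
by rewrite -mulr_natr mulVf ?subee // pnatr_eq0 muln_eq0 -lt0n d_gt0.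
Qed.

Lemma prob_cylinder (l : seq (vertex d * dir d)) : uniq (map fst l) ->
  P [set w | all (fun q => C q.1 w == [set q.2]%SET) l] = (inv2d ^+ size l)%:E.
Proof.
move=> l_uniq; pose dir_at y := [set e | (y, e) \in l]%SET.
have dir_at_step q : q \in l -> dir_at q.1 = [set q.2]%SET.
  move=> ql; apply/setP => e; rewrite !inE; apply/idP/eqP => [qe | ->]; last by case: q ql.
  exact: (congr1 snd (uniq_map_inj_in l_uniq qe ql erefl)).
case: C_1DnG => _ _ indep.
rewrite (_ : [set w | _] = [set w | forall y, y \in map fst l -> C y w = dir_at y]).
  rewrite indep // big_map (eq_big_seq (fun=> inv2d%:E)); last first.
    by move=> q ql; rewrite dir_at_step // prob_choice_set1.
  by rewrite prodEFin big_const_seq count_predT iter_mulr_1.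
apply/seteqP; split=> w /= => [/allP Cw _ /mapP[q ql ->] | Cw].
  by rewrite dir_at_step // (eqP (Cw q ql)).
by apply/allP => q ql; rewrite Cw ?dir_at_step // map_f.
Qed.

Lemma measurable_along x s : measurable [set w | along (@step d) (C^~ w) x s].
Proof.
rewrite /along; apply: measurable_all_seq => q.
exact: (measurable_choice _ (fun S => q.2 \in S)).
Qed.

Lemma prob_along_le x s : self_avoiding (@step d) x s ->
  P [set w | along (@step d) (C^~ w) x s] <= (inv2d ^+ size s)%:E.
Proof.
move=> x_s; set l := steps (@step d) x s.
pose cyl := [set w | all (fun q => C q.1 w == [set q.2]%SET) l].
pose bad := \big[setU/set0]_(q <- l) [set w | #|C q.1 w| != 1%N].
have m_cyl : measurable cyl.
  by apply: measurable_all_seq => q; apply: (measurable_choice _ (pred1 _)).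
have m_bad : measurable bad.
  by apply: bigsetU_measurable => q _; apply: (measurable_choice _ (fun S => #|S| != 1%N)).
(* off [bad], the only choice of each vertex of the walk is the step taken there *)
have along_sub : [set w | along (@step d) (C^~ w) x s] `<=` cyl `|` bad.
  move=> w /allP chosen.
  have [all1 | ] := pselect (forall q, q \in l -> #|C q.1 w| = 1%N).
    left; apply/allP => q ql; have /eqP/cards1P [e Ce] := all1 q ql.
    by move: (chosen q ql); rewrite Ce inE => /eqP <-.
  move=> /existsNP [q /not_implyP [ql /eqP Cq]]; right.
  by rewrite /bad -bigcup_seq; exists q.
apply: le_trans (le_measure _ _ _ along_sub) _; rewrite ?inE.
- exact: measurable_along.
- exact: measurableU.
have P_bad : P bad <= 0.
  apply: le_trans (measure_bigsetU_seq_le _ _ _ _) _.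
    by move=> q; apply: (measurable_choice _ (fun S => #|S| != 1%N)).
  by rewrite big1 // => q _; exact: prob_card_choice_neq1.
have P_cyl : P cyl <= (inv2d ^+ size s)%:E.
  by rewrite prob_cylinder ?self_avoiding_uniq_fst // size_steps.
apply: le_trans (measureU2 _ m_cyl m_bad) _.
by apply: le_trans (leeD P_cyl P_bad) _; rewrite adde0.
Qed.

Lemma dpath_event_bigsetU x n :
  [set w | exists s, size s = n /\ dpath (@step d) (C^~ w) x s] =
  \big[setU/set0]_(s <- all_seqs (dir d) n | self_avoiding (@step d) x s)
    [set w | along (@step d) (C^~ w) x s].
Proof.
rewrite -bigcup_seq_cond; apply/seteqP; split=> w /=.
  by move=> [s [s_n /andP[along_s sa_s]]]; exists s; rewrite //= mem_all_seqs s_n eqxx.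
move=> [s /andP[]]; rewrite mem_all_seqs => /eqP s_n sa_s along_s.
by exists s; split=> //; apply/andP.
Qed.

Lemma measurable_dpath x n :
  measurable [set w | exists s, size s = n /\ dpath (@step d) (C^~ w) x s].
Proof.
by rewrite dpath_event_bigsetU; apply: bigsetU_measurable => s _; apply: measurable_along.
Qed.

Lemma prob_dpath_le x n :
  P [set w | exists s, size s = n /\ dpath (@step d) (C^~ w) x s] <=
  (inv2d ^+ n *+ count (self_avoiding (@step d) x) (all_seqs (dir d) n))%:E.
Proof.
rewrite dpath_event_bigsetU.
apply: le_trans (measure_bigsetU_seq_le _ _ _ (measurable_along x)) _.
apply: (@le_trans _ _
  (\sum_(s <- all_seqs (dir d) n | self_avoiding (@step d) x s) (inv2d ^+ n)%:E)).
  rewrite big_seq_cond [leRHS]big_seq_cond; apply: lee_sum => s /andP[].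
  by rewrite mem_all_seqs => /eqP <-; apply: prob_along_le.
by rewrite sumEFin big_const_seq iter_addr_0.
Qed.

Lemma prob_dpath_le_geometric n :
  P [set w | exists s, size s = n.+1 /\ dpath (@step d) (C^~ w) (origin d) s] <=
  ((((2 * d).-1)%:R / (2 * d)%:R) ^+ n)%:E.
Proof.
apply: le_trans (prob_dpath_le _ _) _; rewrite lee_fin -mulr_natr.
have inv2d_ge0 : (0 <= inv2d)%R by rewrite invr_ge0.
have := count_self_avoiding (@step_reversible d) (origin d) n.
rewrite card_dir -(ler_nat R) => /(ler_wpM2l (exprn_ge0 n.+1 inv2d_ge0)) count_le.
apply: le_trans count_le _.
have two_d_neq0 : ((2 * d)%:R != 0 :> R)%R by rewrite pnatr_eq0 muln_eq0 -lt0n d_gt0.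
by rewrite natrM natrX exprS mulrACA mulVf // mul1r -exprMn mulrC.
Qed.

End OneNeighbourGraph.

Theorem lemma2p1 (d : nat) (hd : (1 <= d)%N)
    (R : realType) (dsp : measure_display) (T : measurableType dsp)
    (P : probability T R) (C : vertex d -> T -> {set dir d}) :
  is_kDnG 1 P C ->
  P [set w | reaches_infinity (fun x => C x w)] = 0%E.
Proof.
move=> C_1DnG.
pose paths n := [set w | exists s, size s = n /\ dpath (@step d) (C^~ w) (origin d) s].
have -> : [set w | reaches_infinity (C^~ w)] = \bigcap_n paths n.
  apply/seteqP; split=> w /= => [/rayP long n _ | long]; first exact: long.
  by apply/rayP => n; apply: long.
have ratio_lt1 : `|((2 * d).-1)%:R / (2 * d)%:R : R| < 1.
  rewrite ger0_norm ?divr_ge0 // ltr_pdivrMr ?mul1r ?ltr_nat ?ltr0n ?muln_gt0 //.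
  by rewrite prednK ?muln_gt0.
apply: ge0_le_expr_eq0 ratio_lt1 _ => // n.
apply: le_trans (prob_dpath_le_geometric C_1DnG hd n).
apply: le_measure; rewrite ?inE; last by move=> w; apply.
- by apply: bigcapT_measurable => k; apply: (measurable_dpath C_1DnG).
- exact: (measurable_dpath C_1DnG).
Qed.
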